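(* Let $m,n$ be integers with $3\leq m\leq n$ and $n\equiv -1 \pmod m$. Then every $(m,n;6)$-bipartite biregular graph has at least $\left(\frac{n}{m}+1\right)(n+1)(m-1)$ vertices, i.e. $B_c(m,n;6)\geq \left(\frac{n}{m}+1\right)(n+1)(m-1)$. Moreover, if a Steiner system $S(2,m,n(m-1)+m)$ exists, then deleting one point of it together with all blocks containing that point yields an incidence structure whose incidence graph is an $(m,n;6)$-bipartite biregular graph on exactly $\left(\frac{n}{m}+1\right)(n+1)(m-1)$ vertices; in that case this graph is an $(m,n;6)$-bipartite biregular cage and $B_c(m,n;6)=\left(\frac{n}{m}+1\right)(n+1)(m-1)$.
   Context: For integers $a,b\geq 2$ and even $g\ge 4$, an $(a,b;g)$-bipartite biregular graph is a finite simple bipartite graph of girth exactly $g$ in which all vertices of one bipartition class have degree $a$ and all vertices of the other class have degree $b$. An $(a,b;g)$-bipartite biregular cage is such a graph of minimum possible order, and $B_c(a,b;g)$ denotes this minimum order. A Steiner system $S(2,k,v)$ is a set of $v$ points together with a family of $k$-element subsets (blocks) such that every pair of distinct points lies in exactly one block. The incidence graph of a point-block structure is the bipartite graph on points and blocks with a point adjacent to a block iff the point lies in the block. *)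

From mathcomp Require Import all_boot all_order all_algebra.
Set Implicit Arguments. Unset Strict Implicit. Unset Printing Implicit Defensive.
Import Order.TTheory GRing.Theory Num.Theory.

Definition simple_graph (T : finType) (e : rel T) : Prop :=
  symmetric e /\ irreflexive e.

Definition deg (T : finType) (e : rel T) (x : T) : nat := #|[set y | e x y]|.

Definition is_cycle (T : finType) (e : rel T) (s : seq T) : bool :=
  [&& 2 < size s, cycle e s & uniq s].

Definition girth_eq (T : finType) (e : rel T) (g : nat) : Prop :=
  (exists s, is_cycle e s /\ size s = g) /\
  (forall s, is_cycle e s -> g <= size s).

Definition bip_bireg (a b g : nat) (T : finType) (e : rel T) : Prop :=
  simple_graph e /\
  (exists A : {set T},
      (forall x y, e x y -> (x \in A) != (y \in A)) /\
      (forall x, x \in A -> deg e x = a) /\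
      (forall x, x \notin A -> deg e x = b)) /\
  girth_eq e g.

Definition bip_cage (a b g : nat) (T : finType) (e : rel T) : Prop :=
  bip_bireg a b g e /\
  forall (T' : finType) (e' : rel T'), bip_bireg a b g e' -> #|T| <= #|T'|.

Definition Bc_eq (a b g N : nat) : Prop :=
  (exists (T : finType) (e : rel T), bip_bireg a b g e /\ #|T| = N) /\
  (forall (T : finType) (e : rel T), bip_bireg a b g e -> N <= #|T|).

Definition steiner2 (k v : nat) (P : finType) (Bl : {set {set P}}) : Prop :=
  #|P| = v /\
  (forall B, B \in Bl -> #|B| = k) /\
  (forall x y : P, x != y -> exists! B, B \in Bl /\ x \in B /\ y \in B).

Definition dvert (P : finType) (Bl : {set {set P}}) (p : P) : finType :=
  ({x : P | x != p} + {B : {set P} | (B \in Bl) && (p \notin B)})%type.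

Definition dinc (P : finType) (Bl : {set {set P}}) (p : P) : rel (dvert Bl p) :=
  fun u v =>
    match u, v with
    | inl x, inr B => val x \in val B
    | inr B, inl x => val x \in val B
    | _, _ => false
    end.

Definition cage_bound (m n : nat) : rat :=
  ((n%:R / m%:R + 1) * (n.+1)%:R * (m - 1)%:R)%R.
Arguments dinc {P} Bl p.
Arguments dvert {P} Bl p.

(* Double counting the edges of an (m, n; 6)-graph with colour classes A (of degree m) and
   B (of degree n) gives m |A| = n |B|, so the order is (n/m + 1) |B|.  Girth 6 means there is no
   4-cycle, so for v in B the n neighbours of v have pairwise disjoint neighbourhoods outside v:
   |B| >= n (m - 1) + 1.  As m divides n + 1 it is coprime to n, hence divides |B|, and the least
   multiple of m above n (m - 1) is (n + 1)(m - 1).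
   In an S(2, m, n (m - 1) + m) every point lies on n + 1 blocks, so after deleting p each of the
   (n + 1)(m - 1) remaining points lies on n remaining blocks; two points share at most one block,
   so the incidence graph has no 4-cycle, and any triangle of points whose three connecting blocks
   avoid p is a 6-cycle. *)

From mathcomp Require Import all_boot all_order all_algebra.
From mathcomp Require Import zify ring.
Import GRing.Theory Num.Theory.
Set Implicit Arguments. Unset Strict Implicit. Unset Printing Implicit Defensive.

Lemma double_count (I J : finType) (r : I -> J -> bool) (A : {set I}) (B : {set J}) :
  \sum_(i in A) #|[set j in B | r i j]| = \sum_(j in B) #|[set i in A | r i j]|.
Proof.
have card_sum (K : finType) (C : {set K}) (f : K -> bool) :
    #|[set x in C | f x]| = \sum_(x in C) f x.
  rewrite -sum1_card big_mkcond [RHS]big_mkcond; apply: eq_bigr => x _.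
  by rewrite !inE; case: (x \in C); case: (f x).
under eq_bigr do rewrite card_sum.
by rewrite exchange_big; apply: eq_bigr => j _; rewrite card_sum.
Qed.

Lemma card_sumType_set (I J : finType) (A : {set I + J}) :
  #|A| = #|[set i | inl i \in A]| + #|[set j | inr j \in A]|.
Proof.
by rewrite -!sum1_card big_sumType; congr (_ + _); apply: eq_bigl => i; rewrite inE.
Qed.

Lemma card_sig_set (T : finType) (Q R : pred T) :
  #|[set y : {x | Q x} | R (val y)]| = #|[set x | Q x && R x]|.
Proof.
rewrite -(card_imset _ val_inj); apply: eq_card => x; rewrite [in RHS]inE.
apply/imsetP/andP => [[y] | [Qx Rx]]; first by rewrite inE => Ry ->; rewrite (valP y).
by exists (exist _ x Qx); rewrite ?inE.
Qed.

Section Graphs.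
Variables (T : finType) (e : rel T).

Definition bipartition (A : {set T}) := forall x y, e x y -> (x \in A) != (y \in A).

Definition C4_free :=
  forall p q r s, e p q -> e q r -> e r s -> e s p -> p != r -> q != s -> False.

Lemma cycle_ge6_C4_free :
  irreflexive e -> (forall s, is_cycle e s -> 6 <= size s) -> C4_free.
Proof.
move=> e_irr girth p q r s epq eqr ers esp pr qs.
have ne x y : e x y -> x != y by apply: contraTneq => ->; rewrite e_irr.
suff /girth : is_cycle e [:: p; q; r; s] by [].
by rewrite /is_cycle /= epq eqr ers esp /= !inE !negb_or pr qs (eq_sym p s) !ne.
Qed.

Section Bipartite.
Variable A : {set T}.
Hypothesis eA : bipartition A.

Lemma bipartition_edgeA x y : e x y -> x \in A -> y \notin A.
Proof. by move/eA; case: (x \in A); case: (y \in A). Qed.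

Lemma bipartition_edgeCA x y : e x y -> x \notin A -> y \in A.
Proof. by move/eA; case: (x \in A); case: (y \in A). Qed.

Lemma bipartition_path_parity x s :
  path e x s -> (last x s \in A) = (x \in A) (+) odd (size s).
Proof.
elim: s x => [|y s IHs] x /=; first by rewrite addbF.
case/andP=> /eA exy /IHs ->.
by move: exy; case: (x \in A); case: (y \in A); case: (odd (size s)).
Qed.

Lemma bipartition_cycle_even s : cycle e s -> ~~ odd (size s).
Proof.
case: s => [|x s] //= /bipartition_path_parity.
by rewrite last_rcons size_rcons /=; case: (x \in A); case: (odd (size s)).
Qed.

Lemma C4_free_cycle_ge6 : C4_free -> forall s, is_cycle e s -> 6 <= size s.
Proof.
move=> C4e s /and3P[s_gt2 s_cyc s_uniq].
have := bipartition_cycle_even s_cyc.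
case: s s_gt2 s_cyc s_uniq => [|p [|q [|r [|t [|u s]]]]] //= _; last by case: s.
case/and5P=> epq eqr ert etp _; rewrite !inE !negb_or => /and4P[/and3P[_ pr _] /andP[_ qt] _ _] _.
by case: (C4e p q r t).
Qed.

Variables (a b : nat).
Hypotheses (e_sym : symmetric e) (degA : forall x, x \in A -> deg e x = a)
  (degCA : forall x, x \notin A -> deg e x = b).

Lemma biregular_handshake : a * #|A| = b * #|~: A|.
Proof.
have sum_deg (C : {set T}) c :
    (forall x, x \in C -> deg e x = c) -> \sum_(x in C) deg e x = c * #|C|.
  by move=> degC; rewrite -sum1_card big_distrr /=; apply: eq_bigr => x /degC ->; rewrite muln1.
rewrite -sum_deg // -sum_deg => [|x]; last by rewrite inE => /degCA.
transitivity (\sum_(x in A) #|[set y in ~: A | e x y]|).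
  apply: eq_bigr => x xA; apply: eq_card => y; rewrite !inE.
  by case exy: (e x y); rewrite ?andbF //= (bipartition_edgeA exy).
rewrite double_count; apply: eq_bigr => y; rewrite inE => yA.
apply: eq_card => x; rewrite !inE e_sym.
by case eyx: (e y x); rewrite ?andbF //= (bipartition_edgeCA eyx).
Qed.

Lemma biregular_card : a * #|T| = (a + b) * #|~: A|.
Proof. by rewrite -(cardsC A) mulnDr biregular_handshake mulnDl addnC. Qed.

Lemma biregular_moore_bound v : C4_free -> v \notin A -> b * (a - 1) < #|~: A|.
Proof.
move=> C4e vA.
pose N := [set u | e v u].
have NA u : u \in N -> u \in A.
  by rewrite inE => /bipartition_edgeCA; apply.
have card_CA : #|~: A| = #|~: A :\ v|.+1 by rewrite (cardsD1 v) inE vA.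
rewrite card_CA ltnS -(degCA vA) -sum_nat_const.
have -> : \sum_(u in N) (a - 1) = \sum_(u in N) #|[set w in ~: A :\ v | e u w]|.
  apply: eq_bigr => u uN; have uA := NA u uN.
  rewrite -(degA uA) /deg (cardsD1 v) inE e_sym.
  move: uN; rewrite inE => ->; rewrite add1n subSS subn0.
  apply: eq_card => w; rewrite !inE.
  case euw: (e u w); rewrite ?andbF ?andbT //.
  by rewrite (bipartition_edgeA euw uA) andbT.
rewrite double_count -sum1_card leq_sum // => w; rewrite !inE => /andP[wv wA].
apply/card_le1_eqP => u1 u2; rewrite !inE => /andP[vu1 u1w] /andP[vu2 u2w].
apply/eqP/negPn/negP => u12.
by apply: (C4e v u1 w u2) => //; rewrite 1?e_sym // eq_sym.
Qed.

End Bipartite.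
End Graphs.

Lemma dvdn_leq_ltnD d N k : d %| N -> d %| k -> N < k + d -> N <= k.
Proof.
move=> /dvdnP[q ->] /dvdnP[j ->]; rewrite addnC -mulSn ltn_mul2r leq_mul2r.
by case/andP=> _; rewrite ltnS => ->; rewrite orbT.
Qed.

Lemma cage_boundE m n : 0 < m ->
  cage_bound m n = (((m + n) * (n.+1 * (m - 1)))%:R / m%:R)%R.
Proof.
move=> m_gt0; have m_neq0 : (m%:R : rat) != 0%R by rewrite pnatr_eq0 -lt0n.
by rewrite /cage_bound !natrM natrD natrB // -addn1 natrD; field.
Qed.

Lemma mulSn_subn1 m n : 0 < m -> n * (m - 1) + m - 1 = n.+1 * (m - 1).
Proof. by move=> m_gt0; rewrite mulSn [RHS]addnC addnBA. Qed.

Lemma bip_bireg6_cage_bound m n (T : finType) (e : rel T) :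
  0 < m -> m %| n.+1 -> bip_bireg m n 6 e -> (cage_bound m n <= #|T|%:R)%R.
Proof.
move=> m_gt0 m_dvd [[e_sym e_irr] [[A [eA [degA degCA]]] [[s [s_cyc s_size]] girth]]].
have C4e := cycle_ge6_C4_free e_irr girth.
have [v vA] : exists v, v \notin A.
  case: s s_cyc s_size => [|x [|y s]] // /and3P[_ /andP[exy _] _] _.
  by case xA: (x \in A); [exists y; rewrite (bipartition_edgeA eA exy) | exists x; rewrite xA].
have CA_gt := biregular_moore_bound eA e_sym degA degCA C4e vA.
have m_dvd_CA : m %| #|~: A|.
  have coprime_mn : coprime m n := coprime_dvdl m_dvd (coprimeSn n).
  by rewrite -(Gauss_dvdr _ coprime_mn) -(biregular_handshake eA e_sym degA degCA) dvdn_mulr.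
have CA_ge : n.+1 * (m - 1) <= #|~: A|.
  by apply: dvdn_leq_ltnD m_dvd_CA _; [exact: dvdn_mulr | rewrite mulSn; lia].
rewrite cage_boundE // ler_pdivrMr ?ltr0n // -natrM ler_nat [leqRHS]mulnC.
by rewrite (biregular_card eA e_sym degA degCA) leq_mul2l CA_ge orbT.
Qed.

Section SteinerSystem.
Variables (P : finType) (Bl : {set {set P}}) (k v : nat).
Hypothesis S_Bl : steiner2 k v Bl.

Lemma steiner_block x y : x != y -> exists B, [/\ B \in Bl, x \in B & y \in B].
Proof. by case: S_Bl => _ [_ uniqB] /uniqB[B [[BBl [xB yB]] _]]; exists B. Qed.

Lemma steiner_block_uniq x y B C : x != y -> B \in Bl -> C \in Bl ->
  x \in B -> y \in B -> x \in C -> y \in C -> B = C.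
Proof.
case: S_Bl => _ [_ uniqB] /uniqB[B0 [_ B0_uniq]] BBl CBl xB yB xC yC.
by rewrite -(B0_uniq B) ?(B0_uniq C).
Qed.

Lemma steiner_replication x : #|[set B in Bl | x \in B]| * (k - 1) = v - 1.
Proof.
case: S_Bl => cardP [cardB _].
rewrite -cardP [RHS]subn1 -(cardsC1 x) -sum_nat_const.
transitivity (\sum_(B in [set B in Bl | x \in B]) #|[set y in [set~ x] | y \in B]|).
  apply: eq_bigr => B; rewrite inE => /andP[BBl xB].
  rewrite -(cardB B BBl) (cardsD1 x B) xB add1n subn1 /=.
  by apply: eq_card => y; rewrite !inE andbC.
rewrite double_count -sum1_card; apply: eq_bigr => y; rewrite !inE => yx.
have xy : x != y by rewrite eq_sym.
have [B [BBl xB yB]] := steiner_block xy.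
apply: (@eq_card1 _ B) => C; rewrite !inE; apply/idP/eqP => [/andP[/andP[CBl xC] yC] | ->].
  exact: steiner_block_uniq xy CBl BBl xC yC xB yB.
by rewrite BBl xB yB.
Qed.

End SteinerSystem.
Section DeletedPoint.
Variables (P : finType) (Bl : {set {set P}}) (p : P) (m n : nat).
Hypotheses (m_gt1 : 1 < m) (S_Bl : steiner2 m (n * (m - 1) + m) Bl).

Local Notation dpoint := {x : P | x != p}.
Local Notation dblock := {B : {set P} | (B \in Bl) && (p \notin B)}.

Lemma steiner_replicationE x : #|[set B in Bl | x \in B]| = n.+1.
Proof.
apply/eqP; rewrite -(eqn_pmul2r (_ : 0 < m - 1)) ?subn_gt0 //.
by rewrite (steiner_replication S_Bl) mulSn_subn1 // ltnW.
Qed.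

Lemma card_blocks_avoiding x : x != p ->
  #|[set B in Bl | (x \in B) && (p \notin B)]| = n.
Proof.
move=> xp; have [Bxp [BxpBl xBxp pBxp]] := steiner_block S_Bl xp.
have := steiner_replicationE x; rewrite (cardsD1 Bxp) inE BxpBl xBxp add1n => -[<-].
apply: eq_card => B; rewrite !inE.
case BBl: (B \in Bl); case xB: (x \in B); rewrite /= ?andbF //.
case pB: (p \in B) => /=.
  by rewrite (steiner_block_uniq S_Bl xp BBl BxpBl xB pB xBxp pBxp) eqxx.
by rewrite andbT; apply/esym/eqP => BE; rewrite BE pBxp in pB.
Qed.

Lemma dinc_sym : symmetric (dinc Bl p).
Proof. by move=> [x|B] [y|C]. Qed.

Lemma dinc_irr : irreflexive (dinc Bl p).
Proof. by case. Qed.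

Definition dblocks : {set dvert Bl p} := [set u | if u is inr _ then true else false].

Lemma dblocks_bipartition : bipartition (dinc Bl p) dblocks.
Proof. by move=> [x|B] [y|C]; rewrite !inE. Qed.

Lemma card_dblocks_through (x : dpoint) : #|[set B : dblock | val x \in val B]| = n.
Proof.
rewrite (card_sig_set _ (fun B : {set P} => val x \in B)) -(card_blocks_avoiding (valP x)).
by apply: eq_card => B; rewrite !inE andbAC -andbA.
Qed.

Lemma card_dpoints_on (B : dblock) : #|[set y : dpoint | val y \in val B]| = m.
Proof.
have /andP[BBl pB] := valP B; have [_ [cardB _]] := S_Bl; rewrite -(cardB _ BBl).
rewrite (card_sig_set _ (fun y => y \in val B)); apply: eq_card => y.
rewrite inE andb_idl // => yB.
by apply: contraTneq yB => ->.
Qed.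

Lemma dinc_deg_dpoints u : u \notin dblocks -> deg (dinc Bl p) u = n.
Proof.
case: u => [x|B]; rewrite inE // => _.
rewrite /deg card_sumType_set (eq_card0 (A := [set _ | _])) => [|y]; last by rewrite !inE.
by rewrite -(card_dblocks_through x); apply: eq_card => B; rewrite !inE.
Qed.

Lemma dinc_deg_dblocks u : u \in dblocks -> deg (dinc Bl p) u = m.
Proof.
case: u => [x|B]; rewrite inE // => _.
rewrite /deg card_sumType_set [X in _ + X](eq_card0 (A := [set _ | _])) => [|C].
  by rewrite addn0 -(card_dpoints_on B); apply: eq_card => y; rewrite !inE.
by rewrite !inE.
Qed.

Lemma dblock_uniq (B C : dblock) (x z : dpoint) : x != z ->
  val x \in val B -> val z \in val B -> val x \in val C -> val z \in val C -> B = C.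
Proof.
move=> xz xB zB xC zC; have /andP[BBl _] := valP B; have /andP[CBl _] := valP C.
apply: val_inj; apply: (steiner_block_uniq S_Bl _ BBl CBl xB zB xC zC).
by rewrite (inj_eq val_inj).
Qed.

Lemma dinc_C4_free : C4_free (dinc Bl p).
Proof.
move=> [x|B] [y|C] [z|D] [w|E] //= h1 h2 h3 h4; rewrite ?(inj_eq inl_inj, inj_eq inr_inj) => ac bd.
  by move/eqP: bd; apply; exact: dblock_uniq ac h1 h2 h4 h3.
by move/eqP: ac; apply; exact: dblock_uniq bd h1 h4 h2 h3.
Qed.

Lemma dinc_hexagon (x y z : dpoint) (B1 C B2 : dblock) :
  val x \in val B1 -> val y \in val B1 -> val y \in val C -> val z \in val C ->
  val z \in val B2 -> val x \in val B2 ->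
  [&& x != y, y != z & x != z] -> [&& B1 != C, C != B2 & B1 != B2] ->
  is_cycle (dinc Bl p) [:: inl x; inr B1; inl y; inr C; inl z; inr B2].
Proof.
move=> xB1 yB1 yC zC zB2 xB2 /and3P[xy yz xz] /and3P[B1C CB2 B1B2].
rewrite /is_cycle /= xB1 yB1 yC zC zB2 xB2 !inE !(inj_eq inl_inj, inj_eq inr_inj).
by rewrite (negbTE xy) (negbTE yz) (negbTE xz) (negbTE B1C) (negbTE CB2) (negbTE B1B2).
Qed.

Lemma dpoint_off_line (B : dblock) (x : dpoint) L : 2 < m -> L \in Bl -> p \in L ->
  exists z : dpoint, [/\ z != x, val z \in val B & val z \notin L].
Proof.
move=> m_gt2 LBl pL; have := card_dpoints_on B; rewrite (cardsD1 x) inE => card_B.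
have /card_gt1P[z1 [z2 []]] : 1 < #|[set z : dpoint | val z \in val B] :\ x|.
  by rewrite -(ltn_add2l (val x \in val B)) card_B; case: (val x \in val B) => //; exact: ltnW.
rewrite !inE => /andP[z1x z1B] /andP[z2x z2B] z12.
case z1L: (val z1 \in L); last by exists z1; rewrite z1L.
exists z2; split => //; apply/negP => z2L; have /andP[BBl pB] := valP B.
have z12' : val z1 != val z2 by rewrite (inj_eq val_inj).
by rewrite -(steiner_block_uniq S_Bl z12' LBl BBl z1L z2L z1B z2B) pL in pB.
Qed.

Lemma dinc_6cycle : 2 < m -> 1 < n -> exists s, is_cycle (dinc Bl p) s /\ size s = 6.
Proof.
move=> m_gt2 n_gt1; have [cardP _] := S_Bl.
have /card_gt0P[x _] : 0 < #|{: dpoint}|.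
  by rewrite card_sig cardC1 cardP; move: (n * (m - 1)) => k; lia.
have /card_gt1P[B1 [B2 [xB1 xB2 B12]]] : 1 < #|[set B : dblock | val x \in val B]|.
  by rewrite card_dblocks_through.
rewrite !inE in xB1 xB2.
have := card_dpoints_on B1; rewrite (cardsD1 x) inE xB1 add1n => card_B1.
have /card_gt0P[y] : 0 < #|[set y : dpoint | val y \in val B1] :\ x|.
  by rewrite -ltnS card_B1 ltnW.
rewrite !inE => /andP[yx yB1].
have py : p != val y by rewrite eq_sym (valP y).
have [L [LBl pL yL]] := steiner_block S_Bl py.
(* Taking z off the block through p and y keeps the block through y and z away from p. *)
have [z [zx zB2 zL]] := dpoint_off_line B2 x m_gt2 LBl pL.
have yz : y != z by apply: contraTneq yL => ->.
have [C [CBl yC zC]] : exists C, [/\ C \in Bl, val y \in C & val z \in C].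
  by apply: (steiner_block S_Bl); rewrite (inj_eq val_inj).
have CBlp : (C \in Bl) && (p \notin C).
  rewrite CBl; apply: contraNN zL => pC.
  by rewrite -(steiner_block_uniq S_Bl py CBl LBl pC yC pL yL).
pose CC : dblock := exist _ C CBlp.
exists [:: inl x; inr B1; inl y; inr CC; inl z; inr B2]; split => //.
apply: dinc_hexagon => //; first by rewrite eq_sym yx yz eq_sym zx.
rewrite B12 andbT; apply/andP; split.
  apply: contraNneq B12 => B1C; apply/eqP.
  by apply: (dblock_uniq (x := x) (z := z)) => //; [rewrite eq_sym | rewrite B1C].
apply: contraNneq B12 => CB2; apply/eqP.
by apply: (dblock_uniq (x := x) (z := y)) => //; [rewrite eq_sym | rewrite -CB2].
Qed.

Lemma card_dpoints : #|~: dblocks| = n.+1 * (m - 1).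
Proof.
have [cardP _] := S_Bl.
rewrite card_sumType_set [X in _ + X](eq_card0 (A := [set _ | _])) => [|B]; last by rewrite !inE.
rewrite addn0 (eq_card (B := {: dpoint})) => [|x]; last by rewrite !inE.
by rewrite card_sig cardC1 cardP -subn1 mulSn_subn1 // ltnW.
Qed.

Lemma deleted_point_bip_bireg : 2 < m -> 1 < n -> bip_bireg m n 6 (dinc Bl p).
Proof.
move=> m_gt2 n_gt1; split; first by split; [exact: dinc_sym | exact: dinc_irr].
split.
  exists dblocks; do !split; [exact: dblocks_bipartition | exact: dinc_deg_dblocks |].
  exact: dinc_deg_dpoints.
split; first exact: dinc_6cycle.
exact: C4_free_cycle_ge6 dblocks_bipartition dinc_C4_free.
Qed.

Lemma card_deleted_point : m * #|dvert Bl p| = (m + n) * (n.+1 * (m - 1)).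
Proof.
rewrite -card_dpoints.
exact: (biregular_card dblocks_bipartition dinc_sym dinc_deg_dblocks dinc_deg_dpoints).
Qed.

End DeletedPoint.

Theorem mainTheorem1 (m n : nat) :
  3 <= m -> m <= n -> n.+1 = 0 %[mod m] ->
  (forall (T : finType) (e : rel T),
      bip_bireg m n 6 e -> (cage_bound m n <= ((#|T|)%:R))%R) /\
  (forall (P : finType) (Bl : {set {set P}}) (p : P),
      steiner2 m (n * (m - 1) + m) Bl ->
      [/\ bip_bireg m n 6 (dinc Bl p),
          (((#|dvert Bl p|)%:R)%R = cage_bound m n :> rat),
          bip_cage m n 6 (dinc Bl p) &
          Bc_eq m n 6 #|dvert Bl p| ]).
Proof.
move=> m_gt2 le_mn n1_mod_m; have m_gt0 : 0 < m by apply: leq_trans m_gt2.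
have m_dvd : m %| n.+1 by rewrite /dvdn n1_mod_m mod0n.
have lower T e := @bip_bireg6_cage_bound m n T e m_gt0 m_dvd.
split=> // P Bl p S_Bl.
have m_gt1 : 1 < m by apply: ltnW.
have bb := deleted_point_bip_bireg p m_gt1 S_Bl m_gt2 (ltnW (leq_trans m_gt2 le_mn)).
have card_eq : (#|dvert Bl p|%:R = cage_bound m n :> rat)%R.
  rewrite cage_boundE // -(card_deleted_point p m_gt1 S_Bl) natrM mulrC mulKf //.
  by rewrite pnatr_eq0 -lt0n.
have minimal (T : finType) (e : rel T) : bip_bireg m n 6 e -> #|dvert Bl p| <= #|T|.
  by move/lower; rewrite -card_eq ler_nat.
by split=> //; split=> //; exists (dvert Bl p), (dinc Bl p).
Qed.
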